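(* Let $S$ be a finite set of red and blue points in the plane in general position, containing at least one point of each color, and let $T$ be a minimum bichromatic spanning tree of $S$. Let $e_1$ and $e_2$ be two edges of $T$ that cross each other, and let $\pi(e_1,e_2)$ denote the unique shortest path in $T$ that contains exactly one endpoint of $e_1$ and exactly one endpoint of $e_2$ (i.e., the path in $T$ joining the endpoint of $e_1$ closest to $e_2$ with the endpoint of $e_2$ closest to $e_1$). Then the two endpoints of $\pi(e_1,e_2)$ have different colors.
   Context: A set of points is in general position if no three of them are collinear. A bichromatic spanning tree of a set $S$ of red and blue points is a spanning tree on vertex set $S$, drawn with straight-line segment edges, in which every edge has one red and one blue endpoint. A minimum bichromatic spanning tree (MinBST) is a bichromatic spanning tree of minimum total Euclidean edge length. Two edges (segments) cross if they share a point that is interior to both segments. *)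

From HB Require Import structures.
From mathcomp Require Import all_boot all_order all_algebra.
From mathcomp Require Import reals.
Set Implicit Arguments. Unset Strict Implicit. Unset Printing Implicit Defensive.
Import Order.TTheory GRing.Theory Num.Theory.
Local Open Scope ring_scope.

Section Geom.
Variable R : realType.
Definition point := (R * R)%type.

Definition dist (a b : point) : R :=
  Num.sqrt ((a.1 - b.1) ^+ 2 + (a.2 - b.2) ^+ 2).

Definition collinear (a b c : point) : Prop :=
  (b.1 - a.1) * (c.2 - a.2) - (b.2 - a.2) * (c.1 - a.1) = 0.

Definition seg_cross (a b c d : point) : Prop :=
  exists t s : R, [/\ 0 < t < 1, 0 < s < 1,
    a.1 + t * (b.1 - a.1) = c.1 + s * (d.1 - c.1) &
    a.2 + t * (b.2 - a.2) = c.2 + s * (d.2 - c.2)].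
End Geom.

Section Graphs.
Variable V : finType.

(* A bichromatic graph on V (colour: true = red, false = blue) is given by
   its edge set E : {set V * V}, each undirected edge {r,b} being stored
   exactly once as the ordered pair (r, b) with r red and b blue. *)
Definition bichromatic (col : V -> bool) (E : {set V * V}) : Prop :=
  forall e, e \in E -> col e.1 /\ ~~ col e.2.

Definition adj (E : {set V * V}) : rel V :=
  fun u v => ((u, v) \in E) || ((v, u) \in E).

Definition is_path (E : {set V * V}) (x : V) (s : seq V) : Prop :=
  uniq (x :: s) /\ path (adj E) x s.

Definition is_cycle (E : {set V * V}) (s : seq V) : Prop :=
  [/\ 3 <= size s, uniq s & cycle (adj E) s]%N.

Definition spanning_tree (E : {set V * V}) : Prop :=
  (forall u v, connect (adj E) u v) /\ (forall s, ~ is_cycle E s).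

Definition bst (col : V -> bool) (E : {set V * V}) : Prop :=
  bichromatic col E /\ spanning_tree E.

Definition tree_length (R : realType) (p : V -> point R) (E : {set V * V}) : R :=
  \sum_(e in E) dist (p e.1) (p e.2).

Definition min_bst (R : realType) (p : V -> point R) (col : V -> bool)
  (E : {set V * V}) : Prop :=
  bst col E /\
  forall E', bst col E' -> tree_length p E <= tree_length p E'.

Definition general_position (R : realType) (p : V -> point R) : Prop :=
  forall i j k : V, i != j -> j != k -> i != k -> ~ collinear (p i) (p j) (p k).

Definition one_endpoint (P : seq V) (e : V * V) : bool :=
  (e.1 \in P) != (e.2 \in P).
End Graphs.

From HB Require Import structures.
From mathcomp Require Import all_boot all_order all_algebra.
From mathcomp Require Import reals ring lra.
Import Order.TTheory GRing.Theory Num.Theory.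

(* Let x and y be the ends of pi(e1, e2) and suppose col x = col y. By
   minimality of the path, x and y are endpoints of different edges, say
   e1 = {x, a} and e2 = {y, b}, and the path joins them without using e1 or
   e2. Then a and b both have the other colour, so replacing e1 and e2 by
   {x, b} and {y, a} leaves a connected bichromatic graph, which contains a
   bichromatic spanning tree of length at most
   |T| - |xa| - |yb| + |xb| + |ya|. But the segments xa and yb cross, so
   |xb| + |ya| < |xa| + |yb|, contradicting the minimality of T. *)

Section PlaneGeometry.
Local Open Scope ring_scope.
Context {R : realType}.
Implicit Types (a b c d k t : R) (P Q U W X : point R).

Definition hypot a b : R := Num.sqrt (a ^+ 2 + b ^+ 2).

Lemma hypot_ge0 a b : 0 <= hypot a b.
Proof. exact: sqrtr_ge0. Qed.

Lemma sqr_hypot a b : hypot a b ^+ 2 = a ^+ 2 + b ^+ 2.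
Proof. by rewrite sqr_sqrtr // addr_ge0 ?sqr_ge0. Qed.

Lemma hypotZ k a b : 0 <= k -> hypot (k * a) (k * b) = k * hypot a b.
Proof.
by move=> k0; rewrite /hypot !exprMn -mulrDr sqrtrM ?sqr_ge0 // sqrtr_sqr ger0_norm.
Qed.

(* Lagrange's identity turns Cauchy-Schwarz into a comparison of squares. *)
Lemma sqr_hypotM a b c d :
  (hypot a b * hypot c d) ^+ 2 = (a * c + b * d) ^+ 2 + (a * d - b * c) ^+ 2.
Proof. by rewrite exprMn !sqr_hypot; ring. Qed.

Lemma dot_le_hypot a b c d : a * c + b * d <= hypot a b * hypot c d.
Proof.
apply: le_trans (ler_norm _) _.
rewrite -sqrtr_sqr -[hypot a b * _]ger0_norm ?mulr_ge0 ?hypot_ge0 //.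
by rewrite -sqrtr_sqr sqr_hypotM ler_wsqrtr // lerDl sqr_ge0.
Qed.

Lemma dot_lt_hypot a b c d :
  a * d - b * c != 0 -> a * c + b * d < hypot a b * hypot c d.
Proof.
move=> nz; have pos : 0 < (a * d - b * c) ^+ 2 by rewrite exprn_even_gt0.
apply: le_lt_trans (ler_norm _) _.
rewrite -sqrtr_sqr -[hypot a b * _]ger0_norm ?mulr_ge0 ?hypot_ge0 //.
by rewrite -sqrtr_sqr sqr_hypotM ltr_sqrt ?ltrDl // ltr_wpDl ?sqr_ge0.
Qed.

Lemma hypotD_le a b c d : hypot (a + c) (b + d) <= hypot a b + hypot c d.
Proof.
rewrite -(ler_pXn2r (n := 2)) ?nnegrE ?addr_ge0 ?hypot_ge0 //.
by rewrite sqrrD !sqr_hypot; have := dot_le_hypot a b c d; lra.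
Qed.

Lemma hypotD_lt a b c d :
  a * d - b * c != 0 -> hypot (a + c) (b + d) < hypot a b + hypot c d.
Proof.
move=> /dot_lt_hypot dot_lt.
rewrite -(ltr_pXn2r (n := 2)) ?nnegrE ?addr_ge0 ?hypot_ge0 //.
by rewrite sqrrD !sqr_hypot; lra.
Qed.

Lemma distE P Q : dist P Q = hypot (P.1 - Q.1) (P.2 - Q.2).
Proof. by []. Qed.

Lemma distC P Q : dist P Q = dist Q P.
Proof. by rewrite !distE /hypot -sqrrN opprB -[(P.2 - _) ^+ 2]sqrrN opprB. Qed.

Lemma dist_triangle P X W : dist P W <= dist P X + dist X W.
Proof.
rewrite !distE.
have -> : P.1 - W.1 = (P.1 - X.1) + (X.1 - W.1) by ring.
have -> : P.2 - W.2 = (P.2 - X.2) + (X.2 - W.2) by ring.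
exact: hypotD_le.
Qed.

Lemma dist_triangle_lt {P X W} :
  ~ collinear P X W -> dist P W < dist P X + dist X W.
Proof.
move=> ncol; rewrite !distE.
have -> : P.1 - W.1 = (P.1 - X.1) + (X.1 - W.1) by ring.
have -> : P.2 - W.2 = (P.2 - X.2) + (X.2 - W.2) by ring.
apply: hypotD_lt; apply: contra_notN ncol => /eqP cross0.
by rewrite /collinear -cross0; ring.
Qed.

Definition lerp P Q t : point R := (P.1 + t * (Q.1 - P.1), P.2 + t * (Q.2 - P.2)).

Lemma dist_lerp P Q t :
  0 <= t <= 1 -> dist P (lerp P Q t) + dist (lerp P Q t) Q = dist P Q.
Proof.
case/andP=> t0 t1; rewrite !distE /=.
have -> : P.1 - (P.1 + t * (Q.1 - P.1)) = t * (P.1 - Q.1) by ring.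
have -> : P.2 - (P.2 + t * (Q.2 - P.2)) = t * (P.2 - Q.2) by ring.
have -> : P.1 + t * (Q.1 - P.1) - Q.1 = (1 - t) * (P.1 - Q.1) by ring.
have -> : P.2 + t * (Q.2 - P.2) - Q.2 = (1 - t) * (P.2 - Q.2) by ring.
by rewrite !hypotZ ?subr_ge0 //; ring.
Qed.

Lemma collinear_lerp {P Q W t} :
  0 < t -> collinear P (lerp P Q t) W -> collinear P Q W.
Proof.
rewrite /collinear /= => t0 col0.
have : t * ((Q.1 - P.1) * (W.2 - P.2) - (Q.2 - P.2) * (W.1 - P.1)) = 0.
  by rewrite -col0; ring.
by move/eqP; rewrite mulf_eq0 gt_eqF //= => /eqP.
Qed.

Lemma seg_cross_lerp {P Q U W} : seg_cross P Q U W ->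
  exists t s, [/\ 0 < t < 1, 0 < s < 1 & lerp P Q t = lerp U W s].
Proof. by case=> t [s] [t01 s01 e1 e2]; exists t, s; rewrite /lerp e1 e2. Qed.

(* Split both segments at the crossing point X; the triangle inequality for
   P, X, W is strict because P, Q, W are not collinear. *)
Lemma seg_cross_dist_lt {P Q U W} : seg_cross P Q U W -> ~ collinear P Q W ->
  dist P W + dist U Q < dist P Q + dist U W.
Proof.
case/seg_cross_lerp=> t [s] [/andP[t0 t1] /andP[s0 s1] eX] nPQW.
have nPXW : ~ collinear P (lerp P Q t) W by move/(collinear_lerp t0).
have tP : dist P (lerp P Q t) + dist (lerp P Q t) Q = dist P Q.
  by rewrite dist_lerp // !ltW.
have sU : dist U (lerp P Q t) + dist (lerp P Q t) W = dist U W.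
  by rewrite eX dist_lerp // !ltW.
have := dist_triangle_lt nPXW; have := dist_triangle U (lerp P Q t) Q.
lra.
Qed.

Lemma seg_cross_sym {P Q U W} : seg_cross P Q U W -> seg_cross U W P Q.
Proof. by case=> t [s] [t01 s01 e1 e2]; exists s, t. Qed.

Lemma seg_cross_rev {P Q U W} : seg_cross P Q U W -> seg_cross Q P W U.
Proof.
case=> t [s] [/andP[t0 t1] /andP[s0 s1] e1 e2]; exists (1 - t), (1 - s).
by split; rewrite ?subr_gt0 ?gtrBl ?t0 ?t1 ?s0 ?s1 //; lra.
Qed.

Lemma seg_cross_common_end {P Q U} : seg_cross P Q U Q -> collinear P Q U.
Proof.
case/seg_cross_lerp=> t [s] [/andP[_ t1] _ [e1 e2]].
have a1 : (1 - t) * (P.1 - Q.1) = (1 - s) * (U.1 - Q.1) by lra.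
have a2 : (1 - t) * (P.2 - Q.2) = (1 - s) * (U.2 - Q.2) by lra.
have : (1 - t) * ((Q.1 - P.1) * (U.2 - P.2) - (Q.2 - P.2) * (U.1 - P.1)) = 0.
  have -> : (1 - t) * ((Q.1 - P.1) * (U.2 - P.2) - (Q.2 - P.2) * (U.1 - P.1))
      = (1 - t) * (P.2 - Q.2) * (U.1 - Q.1) - (1 - t) * (P.1 - Q.1) * (U.2 - Q.2).
    by ring.
  by rewrite a1 a2; ring.
by move/eqP; rewrite mulf_eq0 subr_eq0 eq_sym lt_eqF //= => /eqP.
Qed.
End PlaneGeometry.

Section Graphs.
Context {V : finType}.
Implicit Types (F : {set V * V}) (e : V * V) (u v x : V) (s : seq V).

Definition incident e v := (v == e.1) || (v == e.2).

Lemma adj_sym F : symmetric (adj F).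
Proof. by move=> u v; rewrite /adj orbC. Qed.

Lemma connect_adjC F u v : connect (adj F) u v = connect (adj F) v u.
Proof. exact: sym_connect_sym (adj_sym F) u v. Qed.

Lemma connect_adj_subset {F F' u v} :
  F \subset F' -> connect (adj F) u v -> connect (adj F') u v.
Proof.
move/subsetP=> sFF'; apply: connect_sub => {}u {}v /orP[] uv;
  by apply: connect1; rewrite /adj (sFF' _ uv) ?orbT.
Qed.

Lemma adj_setD1 F e u v :
  (u, v) != e -> (v, u) != e -> adj F u v -> adj (F :\ e) u v.
Proof. by rewrite /adj !inE => -> ->. Qed.

Lemma path_adj_setD1 F e x s :
  ~~ ((e.1 \in x :: s) && (e.2 \in x :: s)) ->
  path (adj F) x s -> path (adj (F :\ e)) x s.
Proof.
move=> e_off; apply: (sub_in_path (P := mem (x :: s))); last exact/allP.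
move=> u v us vs; apply: adj_setD1; apply: contraNneq e_off => <- /=.
  by rewrite us vs.
by rewrite us vs.
Qed.

Lemma connect_adj_setD1 F e u v :
  connect (adj (F :\ e)) e.1 e.2 -> connect (adj F) u v ->
  connect (adj (F :\ e)) u v.
Proof.
move=> ee; apply: connect_sub => {}u {}v uv.
have [uve|ne1] := eqVneq (u, v) e; first by subst e.
have [vue|ne2] := eqVneq (v, u) e; first by subst e; rewrite connect_adjC.
exact/connect1/adj_setD1.
Qed.

(* Closing edge of the cycle [x0; x1; ...; xk]: its endpoints stay joined
   through x1, ..., xk. *)
Lemma cycle_removable_edge F s :
  is_cycle F s -> exists2 e, e \in F & connect (adj (F :\ e)) e.1 e.2.
Proof.
case: s => [|x0 [|x1 [|y t]]] [// _ uniq_s]; set xk := last y t.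
rewrite /cycle rcons_path => /andP[/andP[adj01 path1] adjk0].
case/and3P: uniq_s => x0s x1s _.
have xkt : xk \in y :: t := mem_last y t.
have xk01 : xk \notin [:: x0; x1].
  rewrite !inE; apply/norP; split; apply/eqP=> exk.
    by move: x0s; rewrite -exk in_cons xkt orbT.
  by move: x1s; rewrite -exk xkt.
have join e : e \in [:: (xk, x0); (x0, xk)] -> connect (adj (F :\ e)) x0 xk.
  move=> ek; have off (P : seq V) :
      ~~ ((xk \in P) && (x0 \in P)) -> ~~ ((e.1 \in P) && (e.2 \in P)).
    by move: ek; rewrite !inE => /orP[]/eqP-> //=; rewrite andbC.
  apply: (connect_trans (y := x1)); apply/connectP.
    exists [:: x1] => //; apply: path_adj_setD1; last by rewrite /= adj01.
    by apply: off; rewrite (negPf xk01).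
  exists (y :: t) => //; apply: path_adj_setD1; last exact: path1.
  by apply: off; rewrite (negPf x0s) andbF.
case/orP: adjk0 => /= ek; [exists (xk, x0) | exists (x0, xk)] => //=.
  by rewrite connect_adjC; apply: join; rewrite !inE eqxx.
by apply: join; rewrite !inE eqxx orbT.
Qed.

Lemma connect_adj_of_edges F F' :
  (forall u v, connect (adj F) u v) ->
  {in F, forall e, connect (adj F') e.1 e.2} ->
  forall u v, connect (adj F') u v.
Proof.
move=> connF edgesF' u v; apply: connect_sub (connF u v) => {}u {}v /orP[] uv.
  exact: edgesF' uv.
by rewrite connect_adjC; apply: edgesF' uv.
Qed.

(* A minimum-size connected spanning subgraph has no cycle. *)
Lemma connected_sub_spanning_tree {F} :
  (forall u v, connect (adj F) u v) ->
  exists2 T : {set V * V}, T \subset F & spanning_tree T.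
Proof.
move=> connF.
pose P (T : {set V * V}) :=
  (T \subset F) && [forall u, forall v, connect (adj T) u v].
have PF : P F by rewrite /P subxx; apply/forallP=> u; apply/forallP=> v.
case: (arg_minnP (fun T : {set V * V} => #|T|) PF) => T /andP[TF connT] minT.
have {}connT u v : connect (adj T) u v by move/forallP/(_ u)/forallP: connT.
exists T => //; split=> // s /cycle_removable_edge[e eT ee].
have /minT : P (T :\ e).
  rewrite /P (subset_trans (subsetDl _ _) TF).
  by apply/forallP=> u; apply/forallP=> v; apply: connect_adj_setD1.
by rewrite (cardsD1 e T) eT ltnn.
Qed.
End Graphs.

Section Exchange.
Local Open Scope ring_scope.
Variables (R : realType) (V : finType) (p : V -> point R) (col : V -> bool).
Implicit Types (F : {set V * V}) (g : V * V) (u v : V).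

Lemma tree_length_subset {F F'} :
  F \subset F' -> tree_length p F <= tree_length p F'.
Proof.
move=> sFF'; rewrite /tree_length [X in _ <= X](big_setID F) /= (setIidPr sFF').
by rewrite lerDl sumr_ge0 // => g _; apply: sqrtr_ge0.
Qed.

Lemma tree_length_setU1 g F :
  tree_length p (g |: F) <= dist (p g.1) (p g.2) + tree_length p F.
Proof.
rewrite /tree_length; have [gF|gF] := boolP (g \in F); last by rewrite big_setU1.
by rewrite (setUidPr _) ?sub1set // lerDr sqrtr_ge0.
Qed.

Lemma tree_length_setD1 {g F} : g \in F ->
  tree_length p F = dist (p g.1) (p g.2) + tree_length p (F :\ g).
Proof. by move=> gF; rewrite /tree_length (big_setD1 _ gF). Qed.

(* The pair under which the edge {u, v} is stored in a bichromatic edge set. *)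
Definition rb_edge u v : V * V := if col u then (u, v) else (v, u).

Lemma dist_rb_edge u v :
  dist (p (rb_edge u v).1) (p (rb_edge u v).2) = dist (p u) (p v).
Proof. by rewrite /rb_edge; case: (col u); rewrite // distC. Qed.

Lemma rb_edge_bichromatic u v :
  col v != col u -> col (rb_edge u v).1 /\ ~~ col (rb_edge u v).2.
Proof. by rewrite /rb_edge; case cu: (col u) => /=; rewrite cu; case: (col v). Qed.

Lemma connect_rb_edge F u v : connect (adj F) u v ->
  connect (adj F) (rb_edge u v).1 (rb_edge u v).2.
Proof. by rewrite /rb_edge; case: (col u); rewrite //= connect_adjC. Qed.

Lemma adj_rb_edge F u v : rb_edge u v \in F -> adj F u v.
Proof. by rewrite /rb_edge /adj; case: (col u) => ->; rewrite ?orbT. Qed.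

Lemma bichromatic_rb_edge {F g v} : bichromatic col F -> g \in F ->
  incident g v -> exists2 a, g = rb_edge v a & col a != col v.
Proof.
move=> bF /bF[red1 blue2] /orP[]/eqP->; rewrite /rb_edge.
  by exists g.2; rewrite red1 -?surjective_pairing //; apply: contraNneq blue2 => ->.
by exists g.1; rewrite (negPf blue2) -?surjective_pairing //; rewrite red1.
Qed.

Section SameColourPair.
Variables (E : {set V * V}) (x a y b : V).
Hypotheses (minE : min_bst p col E)
  (xaE : rb_edge x a \in E) (ybE : rb_edge y b \in E)
  (xa_yb : rb_edge x a != rb_edge y b)
  (col_xy : col x = col y) (col_ax : col a != col x) (col_by : col b != col y)
  (joined : connect (adj (E :\ rb_edge x a :\ rb_edge y b)) x y).

(* Replacing {x, a} and {y, b} by {x, b} and {y, a} keeps a connected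
   bichromatic spanning graph, which contains a bichromatic spanning tree. *)
Lemma min_bst_exchange :
  dist (p x) (p a) + dist (p y) (p b) <= dist (p x) (p b) + dist (p y) (p a).
Proof.
case: minE => [[bichE [connE _]] minimal].
have joinedE0 := joined; set E0 := E :\ rb_edge x a :\ rb_edge y b in joinedE0.
set E' := rb_edge x b |: (rb_edge y a |: E0).
have sE0 : E0 \subset E' := subset_trans (subsetU1 _ _) (subsetU1 _ _).
have joined' := connect_adj_subset sE0 joinedE0.
have xb : connect (adj E') x b by apply/connect1/adj_rb_edge; rewrite setU11.
have ya : connect (adj E') y a by apply/connect1/adj_rb_edge; rewrite setU1r ?setU11.
have bichE' : bichromatic col E'.
  move=> g; rewrite !in_setU1 => /or3P[/eqP->|/eqP->|/setD1P[_ /setD1P[_ /bichE]]] //.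
    by apply: rb_edge_bichromatic; rewrite col_xy.
  by apply: rb_edge_bichromatic; rewrite -col_xy.
have connE' : forall u v, connect (adj E') u v.
  apply: connect_adj_of_edges connE _ => g gE.
  have [->|g1] := eqVneq g (rb_edge x a).
    by apply/connect_rb_edge/(connect_trans joined' ya).
  have [->|g2] := eqVneq g (rb_edge y b).
    by apply/connect_rb_edge; rewrite connect_adjC in joined'; apply: connect_trans xb.
  by apply/connect1; rewrite /adj -surjective_pairing (subsetP sE0) // !inE g1 g2.
have [T sTE' bstT] := connected_sub_spanning_tree connE'.
have := minimal T (conj (fun g gT => bichE' g (subsetP sTE' g gT)) bstT).
have := tree_length_subset sTE'.
have := tree_length_setU1 (rb_edge x b) (rb_edge y a |: E0).
have := tree_length_setU1 (rb_edge y a) E0.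
have ybE' : rb_edge y b \in E :\ rb_edge x a by rewrite !inE eq_sym xa_yb.
rewrite (tree_length_setD1 xaE) (tree_length_setD1 ybE') !dist_rb_edge.
lra.
Qed.

Lemma min_bst_no_cross :
  general_position p ->
  ~ seg_cross (p (rb_edge x a).1) (p (rb_edge x a).2)
              (p (rb_edge y b).1) (p (rb_edge y b).2).
Proof.
move=> gp; have cross_xayb : seg_cross (p (rb_edge x a).1) (p (rb_edge x a).2)
    (p (rb_edge y b).1) (p (rb_edge y b).2) -> seg_cross (p x) (p a) (p y) (p b).
  by rewrite /rb_edge -col_xy; case: (col x) => // /seg_cross_rev.
move=> /cross_xayb cross.
have xa : x != a by apply: contraNneq col_ax => <-.
have xb : x != b by apply: contraNneq col_by => <-; rewrite col_xy.
have [eab|ab] := eqVneq a b.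
  subst b; have xy : x != y by apply: contraNneq xa_yb => ->.
  have ay : a != y by apply: contraNneq col_ax => ->; rewrite col_xy.
  exact: gp _ _ _ xa ay xy (seg_cross_common_end cross).
have := seg_cross_dist_lt cross (gp x a b xa ab xb); have := min_bst_exchange.
lra.
Qed.
End SameColourPair.

Lemma min_bst_incident_colours E g1 g2 x y :
  general_position p -> min_bst p col E ->
  g1 \in E -> g2 \in E -> g1 != g2 ->
  seg_cross (p g1.1) (p g1.2) (p g2.1) (p g2.2) ->
  incident g1 x -> incident g2 y -> connect (adj (E :\ g1 :\ g2)) x y ->
  col x != col y.
Proof.
move=> gp minE g1E g2E g12 cross g1x g2y joined; apply/negP=> /eqP col_xy.
have bichE : bichromatic col E by case: minE => [[]].
have [a g1a col_ax] := bichromatic_rb_edge bichE g1E g1x.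
have [b g2b col_by] := bichromatic_rb_edge bichE g2E g2y.
subst g1 g2.
exact: min_bst_no_cross minE g1E g2E g12 col_xy col_ax col_by joined gp cross.
Qed.
End Exchange.
Arguments min_bst_incident_colours {R V p col E g1 g2 x y}.

Section ShortestLink.
Context {V : finType}.
Implicit Types (g : V * V) (v x : V) (s t : seq V).

Lemma one_endpoint_seq1 g v : one_endpoint [:: v] g -> incident g v.
Proof.
by rewrite /one_endpoint /incident !inE !(eq_sym v); case: (g.1 == v); case: (g.2 == v).
Qed.

Lemma one_endpointP g t :
  one_endpoint t g -> ~~ ((g.1 \in t) && (g.2 \in t)).
Proof. by rewrite /one_endpoint; case: (g.1 \in t); case: (g.2 \in t). Qed.

Lemma one_endpoint_cons {g v} t :
  ~~ incident g v -> one_endpoint (v :: t) g = one_endpoint t g.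
Proof.
case/norP=> v1 v2.
by rewrite /one_endpoint !in_cons !(eq_sym _ v) (negPf v1) (negPf v2).
Qed.

Lemma one_endpoint_rcons {g v} t :
  ~~ incident g v -> one_endpoint (rcons t v) g = one_endpoint t g.
Proof. by move=> vg; rewrite -(one_endpoint_cons t vg) /one_endpoint !mem_rcons. Qed.

Lemma one_endpoint_incident {g u v t} : one_endpoint t g ->
  incident g u -> incident g v -> u \in t -> v \in t -> u = v.
Proof.
move=> /one_endpointP one /orP[]/eqP-> /orP[]/eqP-> // g1t g2t;
  by move: one; rewrite g1t g2t.
Qed.

Lemma uniq_last_head x s : uniq (x :: s) -> last x s = x -> s = [::].
Proof.
case: s => // z t /andP[x_zt _] /= last_x.
by move: x_zt; rewrite -{1}last_x mem_last.
Qed.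

Variables (E : {set V * V}) (e1 e2 : V * V).

Definition is_link x s : Prop :=
  [/\ is_path E x s, one_endpoint (x :: s) e1 & one_endpoint (x :: s) e2].

Definition shortest_link x s : Prop :=
  is_link x s /\ forall x' s', is_link x' s' -> (size s <= size s')%N.

Lemma shortest_link_head {x s} : shortest_link x s -> incident e1 x || incident e2 x.
Proof.
case: s => [|z t] [[[uniq_xzt path_xzt] one1 one2] shortest].
  by rewrite one_endpoint_seq1.
case/andP: uniq_xzt => _ uniq_zt; case/andP: path_xzt => _ path_zt.
apply: contraT => /norP[x1 x2]; have := shortest z t; rewrite ltnn; apply.
by split; [split | rewrite -(one_endpoint_cons _ x1) | rewrite -(one_endpoint_cons _ x2)].
Qed.

Lemma shortest_link_last {x s} :
  shortest_link x s -> incident e1 (last x s) || incident e2 (last x s).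
Proof.
case/lastP: s => [|t z] [[[uniq_xtz path_xtz] one1 one2] shortest].
  by rewrite one_endpoint_seq1.
rewrite last_rcons; apply: contraT => /norP[z1 z2].
have := shortest x t; rewrite size_rcons ltnn; apply.
move: uniq_xtz path_xtz one1 one2; rewrite -rcons_cons rcons_uniq rcons_path.
rewrite (one_endpoint_rcons _ z1) (one_endpoint_rcons _ z2).
by move=> /andP[_ uniq_xt] /andP[path_xt _].
Qed.

Lemma shortest_link_avoids {x s} :
  shortest_link x s -> connect (adj (E :\ e1 :\ e2)) x (last x s).
Proof.
case=> [[[_ path_xs] /one_endpointP one1 /one_endpointP one2] _].
by apply/connectP; exists s => //; do 2 apply: path_adj_setD1 => //.
Qed.

(* If both ends of the link met the same edge they would coincide, so the
   link would be a single vertex, incident to the other edge as well. *)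
Lemma shortest_link_ends {x s} : shortest_link x s ->
  (incident e1 x && incident e2 (last x s)) || (incident e2 x && incident e1 (last x s)).
Proof.
move=> link; have := shortest_link_head link; have := shortest_link_last link.
case: link => [[[uniq_xs _] one1 one2] _].
have single g : one_endpoint (x :: s) g -> incident g x -> incident g (last x s) ->
    last x s = x /\ s = [::].
  move=> one gx gy.
  have yx := one_endpoint_incident one gy gx (mem_last x s) (mem_head x s).
  by split; last exact: uniq_last_head yx.
case/orP=> [y1|y2] /orP[x1|x2].
- have [-> s0] := single _ one1 x1 y1.
  by move: one2; rewrite s0 x1 => /one_endpoint_seq1->.
- by rewrite x2 y1 orbT.
- by rewrite x1 y2.
- have [-> s0] := single _ one2 x2 y2.
  by move: one1; rewrite s0 x2 => /one_endpoint_seq1->; rewrite orbT.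
Qed.
End ShortestLink.
Arguments shortest_link_ends {V E e1 e2 x s}.
Arguments shortest_link_avoids {V E e1 e2 x s}.

Theorem lemma3 (R : realType) (V : finType) (p : V -> point R)
  (col : V -> bool) (E : {set V * V}) (e1 e2 : V * V) (x : V) (s : seq V) :
  injective p ->
  general_position p ->
  (exists u, col u) -> (exists v, ~~ col v) ->
  min_bst p col E ->
  e1 \in E -> e2 \in E -> e1 != e2 ->
  seg_cross (p e1.1) (p e1.2) (p e2.1) (p e2.2) ->
  (* pi(e1,e2) = x :: s : a shortest path in the tree containing exactly
     one endpoint of e1 and exactly one endpoint of e2 *)
  is_path E x s -> one_endpoint (x :: s) e1 -> one_endpoint (x :: s) e2 ->
  (forall x' s', is_path E x' s' -> one_endpoint (x' :: s') e1 ->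
     one_endpoint (x' :: s') e2 -> (size s <= size s')%N) ->
  col x != col (last x s).
Proof.
move=> _ gp _ _ minE e1E e2E e12 cross path_xs one1 one2 shortest.
have link : shortest_link E e1 e2 x s.
  by split=> [|x' s' [path' one1' one2']]; [split | apply: shortest path' one1' one2'].
have joined := shortest_link_avoids link.
case/orP: (shortest_link_ends link) => /andP[ends1 ends2].
  exact: min_bst_incident_colours gp minE e1E e2E e12 cross ends1 ends2 joined.
apply: min_bst_incident_colours gp minE e2E e1E _ (seg_cross_sym cross) ends1 ends2 _.
  by rewrite eq_sym.
by rewrite setDDl setUC -setDDl.
Qed.
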